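(* Let $S$ be a semigroup with tight twisting $\Phi$ and $0$-twisted semigroup $T_\Phi^0$. Then for every $\mathcal{K}\in\{\mathcal{R},\mathcal{L},\mathcal{D},\mathcal{J},\mathcal{H}\}$, as relations on $T_\Phi^0$, $\mathcal{K}^{T_\Phi^0}=\mathcal{K}^{S}\cup\{(0,0)\}$.
   Context: Green's relations are the standard ones; a superscript indicates the semigroup in which they are computed. $\mathbb{N}=\{0,1,2,\dots\}$. A twisting of a semigroup $S$ is a map $\Phi:S\times S\to\mathbb{N}$ with $\Phi(a,b)+\Phi(ab,c)=\Phi(a,bc)+\Phi(b,c)$ for all $a,b,c\in S$. It is tight if (1) for all $a,b\in S$ there is $a'\in S$ with $ab=a'b$ and $\Phi(a',b)=0$, and (2) for all $a,b\in S$ there is $b'\in S$ with $ab=ab'$ and $\Phi(a,b')=0$. For $S=(X,\cdot)$ with twisting $\Phi$, the $0$-twisted semigroup is $T_\Phi^0=(X\sqcup\{0\},* )$ where $a*b=ab$ if $a,b\neq0$ and $\Phi(a,b)=0$, and $a*b=0$ otherwise. *)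

From Stdlib Require Import Arith.

Section Defs.
Context {X : Type}.

Definition associative_op (m : X -> X -> X) : Prop :=
  forall a b c, m a (m b c) = m (m a b) c.

Definition is_twisting (m : X -> X -> X) (Phi : X -> X -> nat) : Prop :=
  forall a b c, Phi a b + Phi (m a b) c = Phi a (m b c) + Phi b c.

Definition tight (m : X -> X -> X) (Phi : X -> X -> nat) : Prop :=
  (forall a b, exists a', m a b = m a' b /\ Phi a' b = 0) /\
  (forall a b, exists b', m a b = m a b' /\ Phi a b' = 0).

(* the 0-twisted semigroup T^0_Phi on X ⊔ {0}: None plays the role of 0 *)
Definition twisted0 (m : X -> X -> X) (Phi : X -> X -> nat)
  (u v : option X) : option X :=
  match u, v with
  | Some a, Some b => if Nat.eqb (Phi a b) 0 then Some (m a b) else None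
  | _, _ => None
  end.
End Defs.

Section Green.
Context {Y : Type} (op : Y -> Y -> Y).

(* a ∈ b S^1 *)
Definition in_right_ideal (a b : Y) : Prop := a = b \/ exists x, a = op b x.
(* a ∈ S^1 b *)
Definition in_left_ideal (a b : Y) : Prop := a = b \/ exists x, a = op x b.
(* a ∈ S^1 b S^1 *)
Definition in_ideal (a b : Y) : Prop :=
  a = b \/ (exists x, a = op x b) \/ (exists y, a = op b y) \/
  (exists x y, a = op (op x b) y).

Definition greenR (a b : Y) : Prop := in_right_ideal a b /\ in_right_ideal b a.
Definition greenL (a b : Y) : Prop := in_left_ideal a b /\ in_left_ideal b a.
Definition greenJ (a b : Y) : Prop := in_ideal a b /\ in_ideal b a.
Definition greenH (a b : Y) : Prop := greenR a b /\ greenL a b.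
Definition greenD (a b : Y) : Prop := exists c, greenR a c /\ greenL c b.
End Green.

Inductive green_kind := KR | KL | KD | KJ | KH.

Definition green {Y : Type} (K : green_kind) (op : Y -> Y -> Y) : Y -> Y -> Prop :=
  match K with
  | KR => greenR op
  | KL => greenL op
  | KD => greenD op
  | KJ => greenJ op
  | KH => greenH op
  end.

(* Tightness is exactly what lets a factorisation [a = b x] in S be replaced by
   one with [Phi b x' = 0], i.e. by a factorisation [a = b * x'] in T^0; the
   converse direction is immediate since [*] agrees with the product of S when
   it is non-zero.  Hence the principal one- and two-sided ideals of non-zero
   elements coincide in S and in T^0, while the zero of T^0 is only related to
   itself. *)
From Stdlib Require Import Arith.

Section ZeroElement.
Context {Y : Type} (op : Y -> Y -> Y).

Definition is_zero (z : Y) : Prop := forall x, op z x = z /\ op x z = z.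

Lemma green_refl (K : green_kind) (a : Y) : green K op a a.
Proof.
  assert (R : greenR op a a) by (split; left; reflexivity).
  assert (L : greenL op a a) by (split; left; reflexivity).
  destruct K; simpl.
  - exact R.
  - exact L.
  - exists a; split; assumption.
  - split; left; reflexivity.
  - split; assumption.
Qed.

Variable z : Y.
Hypothesis op_zero : is_zero z.

Lemma in_right_ideal_zero (a : Y) : in_right_ideal op a z -> a = z.
Proof. intros [E | [x E]]; [exact E | rewrite E; apply op_zero]. Qed.

Lemma in_left_ideal_zero (a : Y) : in_left_ideal op a z -> a = z.
Proof. intros [E | [x E]]; [exact E | rewrite E; apply op_zero]. Qed.

Lemma in_ideal_zero (a : Y) : in_ideal op a z -> a = z.
Proof.
  intros [E | [[x E] | [[y E] | [x [y E]]]]]; rewrite E; try reflexivity.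
  - apply op_zero.
  - apply op_zero.
  - rewrite (proj2 (op_zero x)); apply op_zero.
Qed.

Lemma green_zero (K : green_kind) (u v : Y) : green K op u v -> (u = z <-> v = z).
Proof.
  destruct K; simpl.
  - intros [Huv Hvu]; split; intros E; subst; apply in_right_ideal_zero; assumption.
  - intros [Huv Hvu]; split; intros E; subst; apply in_left_ideal_zero; assumption.
  - intros [c [[Huc Hcu] [Hcv Hvc]]]; split; intros E; subst.
    + rewrite (in_right_ideal_zero c Hcu) in Hvc; apply in_left_ideal_zero, Hvc.
    + rewrite (in_left_ideal_zero c Hcv) in Huc; apply in_right_ideal_zero, Huc.
  - intros [Huv Hvu]; split; intros E; subst; apply in_ideal_zero; assumption.
  - intros [[Huv Hvu] _]; split; intros E; subst; apply in_right_ideal_zero; assumption.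
Qed.

End ZeroElement.

Section Twisted.
Context {X : Type} (m : X -> X -> X) (Phi : X -> X -> nat).
Notation T := (twisted0 m Phi).

Lemma twisted0_zero : is_zero T None.
Proof. intros [x|]; split; reflexivity. Qed.

Lemma twisted0_Some (a b : X) : Phi a b = 0 -> T (Some a) (Some b) = Some (m a b).
Proof. intros H; simpl; rewrite H; reflexivity. Qed.

Lemma twisted0_Some_inv (u v : option X) (c : X) : T u v = Some c ->
  exists a b, u = Some a /\ v = Some b /\ c = m a b.
Proof.
  destruct u as [a|], v as [b|]; simpl; try discriminate.
  destruct (Phi a b =? 0); intros H; [injection H as <-; eauto | discriminate].
Qed.

Hypothesis Phi_tight : tight m Phi.

Lemma in_right_ideal_twisted0 (a b : X) :
  in_right_ideal T (Some a) (Some b) <-> in_right_ideal m a b.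
Proof.
  split; intros [E | [x E]].
  - left; congruence.
  - symmetry in E; apply twisted0_Some_inv in E as (b' & x' & Eb & _ & E).
    injection Eb as <-; right; eauto.
  - left; congruence.
  - destruct (proj2 Phi_tight b x) as [x' [Ex Hx]].
    right; exists (Some x'); rewrite twisted0_Some by exact Hx; congruence.
Qed.

Lemma in_left_ideal_twisted0 (a b : X) :
  in_left_ideal T (Some a) (Some b) <-> in_left_ideal m a b.
Proof.
  split; intros [E | [x E]].
  - left; congruence.
  - symmetry in E; apply twisted0_Some_inv in E as (x' & b' & _ & Eb & E).
    injection Eb as <-; right; eauto.
  - left; congruence.
  - destruct (proj1 Phi_tight x b) as [x' [Ex Hx]].
    right; exists (Some x'); rewrite twisted0_Some by exact Hx; congruence.
Qed.

Lemma in_ideal_twisted0 (a b : X) :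
  in_ideal T (Some a) (Some b) <-> in_ideal m a b.
Proof.
  split.
  - intros [E | [[x E] | [[y E] | [x [y E]]]]].
    + left; congruence.
    + destruct (proj1 (in_left_ideal_twisted0 a b) (or_intror (ex_intro _ x E)))
        as [E' | [x' E']]; [left | right; left; exists x']; assumption.
    + destruct (proj1 (in_right_ideal_twisted0 a b) (or_intror (ex_intro _ y E)))
        as [E' | [y' E']]; [left | right; right; left; exists y']; assumption.
    + symmetry in E; apply twisted0_Some_inv in E as (c & y' & Ec & _ & E).
      apply twisted0_Some_inv in Ec as (x' & b' & _ & Eb & Ec).
      injection Eb as <-; subst; right; right; right; eauto.
  - intros [E | [[x E] | [[y E] | [x [y E]]]]].
    + left; congruence.
    + destruct (proj2 (in_left_ideal_twisted0 a b) (or_intror (ex_intro _ x E)))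
        as [E' | [x' E']]; [left | right; left; exists x']; assumption.
    + destruct (proj2 (in_right_ideal_twisted0 a b) (or_intror (ex_intro _ y E)))
        as [E' | [y' E']]; [left | right; right; left; exists y']; assumption.
    + destruct (proj1 Phi_tight x b) as [x' [Ex Hx]].
      destruct (proj2 Phi_tight (m x' b) y) as [y' [Ey Hy]].
      right; right; right; exists (Some x'), (Some y').
      rewrite twisted0_Some by exact Hx; rewrite twisted0_Some by exact Hy.
      congruence.
Qed.

Lemma green_twisted0_Some (K : green_kind) (a b : X) :
  green K T (Some a) (Some b) <-> green K m a b.
Proof.
  destruct K; simpl; unfold greenH, greenR, greenL, greenJ, greenD;
    try (rewrite ?in_right_ideal_twisted0, ?in_left_ideal_twisted0,
           ?in_ideal_twisted0; reflexivity).
  split.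
  - intros [[c|] [[Hac Hca] [Hcb Hbc]]].
    + rewrite in_right_ideal_twisted0, in_left_ideal_twisted0 in *.
      exists c; repeat split; assumption.
    + discriminate (in_right_ideal_zero T None twisted0_zero _ Hac).
  - intros [c [[Hac Hca] [Hcb Hbc]]]; exists (Some c).
    unfold greenR, greenL.
    rewrite !in_right_ideal_twisted0, !in_left_ideal_twisted0; tauto.
Qed.

End Twisted.

Theorem mainTheorem3 (X : Type) (m : X -> X -> X) (Phi : X -> X -> nat) :
  associative_op m -> is_twisting m Phi -> tight m Phi ->
  forall (K : green_kind) (u v : option X),
    green K (twisted0 m Phi) u v <->
    ((exists a b, u = Some a /\ v = Some b /\ green K m a b) \/
     (u = None /\ v = None)).
Proof.
  intros _ _ Phi_tight K u v.
  pose proof (green_zero _ _ (twisted0_zero m Phi) K u v) as zero_iff.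
  split.
  - destruct u as [a|], v as [b|]; intros H.
    + left; exists a, b; rewrite <- green_twisted0_Some by exact Phi_tight; auto.
    + discriminate (proj2 (zero_iff H) eq_refl).
    + discriminate (proj1 (zero_iff H) eq_refl).
    + right; auto.
  - intros [(a & b & -> & -> & H) | [-> ->]].
    + apply green_twisted0_Some; assumption.
    + apply green_refl.
Qed.
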